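(* Let $\alpha\in(0,1]$, $k\ge1$ an integer, and $\beta=1-(1-\alpha)^{1/k}$. Let $\mathcal{F}$ be a finite family of convex sets in $\mathbb{R}^d$ with $|\mathcal{F}|\ge k$, and let $b\in\mathbb{R}^d$. Assume that for at least an $\alpha$ fraction of the $k$-element subfamilies $\{K_1,\dots,K_k\}\subseteq\mathcal{F}$, the set $\bigcap_{i=1}^kK_i$ has a point in $B(b,1)$. Then there is $q\in\mathbb{R}^d$ such that at least $\beta|\mathcal{F}|$ elements of $\mathcal{F}$ intersect the ball $B(q,1/\sqrt k)$.
   Context: $B(p,\rho)$ is the closed Euclidean ball of centre $p$ and radius $\rho$. *)

From HB Require Import structures.
From mathcomp Require Import all_boot all_order all_algebra.
From mathcomp Require Import all_classical all_reals all_analysis.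
Set Implicit Arguments. Unset Strict Implicit. Unset Printing Implicit Defensive.
Import Order.TTheory GRing.Theory Num.Theory.
Local Open Scope classical_set_scope.
Local Open Scope ring_scope.

Definition enorm (R : realType) (d : nat) (x : 'rV[R]_d) : R :=
  Num.sqrt (\sum_(i < d) x ord0 i ^+ 2).

Definition cball (R : realType) (d : nat) (p : 'rV[R]_d) (rho : R)
  : set 'rV[R]_d := [set x | enorm (x - p) <= rho].

(* Call a k-subfamily pierced if its intersection meets B(b, 1). For a
   subfamily T, let C(T) be the convex hull of one chosen point of B(b, 1) in
   the intersection of S, for each pierced S containing T: a compact convex
   subset of every F_i, i in T, shrinking as T grows. Let h(T) be the squared
   distance from b to C(T), attained at p(T). If adding x to T raises h by at
   most 1/k, then by Pythagoras for nearest points F_x meets B(p(T), 1/sqrt k).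
   Along any ordering of a pierced k-subfamily, h grows from >= 0 to <= 1 in k
   steps, so one of the steps is small. Let M be the largest number of sets met
   by a ball B(p(T), 1/sqrt k). Each T with |T| < k then has at least n - M
   extensions by a large step, and k successive large steps always spell an
   unpierced k-subfamily; hence (n - M)^k <= k! #unpierced <= (1 - alpha) n^k,
   which is M >= (1 - (1 - alpha)^(1/k)) n. *)

From HB Require Import structures.
From mathcomp Require Import all_boot all_order all_algebra.
From mathcomp Require Import all_classical all_reals all_analysis.
From mathcomp Require Import ring lra zify.
Import Order.TTheory GRing.Theory Num.Theory.
Import numFieldTopology.Exports numFieldNormedType.Exports.
Local Open Scope classical_set_scope.
Local Open Scope ring_scope.
Set Implicit Arguments. Unset Strict Implicit. Unset Printing Implicit Defensive.

Lemma exists_small_increment (R : realDomainType) (f : nat -> R) (m : nat) (c : R) :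
  (0 < m)%N -> f m - f 0 <= m%:R * c -> exists2 j, (j < m)%N & f j.+1 - f j <= c.
Proof.
move=> m_gt0 total_le.
have [//|no_small] := pselect (exists2 j, (j < m)%N & f j.+1 - f j <= c).
have large j : (0 <= j < m)%N -> c < f j.+1 - f j.
  by move=> /andP[_ jm]; rewrite ltNge; apply/negP => small; apply: no_small; exists j.
have := ltr_sum_nat m_gt0 large.
by rewrite telescope_sumr // sumr_const_nat subn0 -mulr_natl ltNge total_le.
Qed.

Lemma rcons_eq_cat_cons (T : Type) (s s1 s2 : seq T) x y : rcons s x = s1 ++ y :: s2 ->
  (s1 = s /\ y = x) \/ exists s2', s = s1 ++ y :: s2'.
Proof.
case/lastP: s2 => [|s2' z]; first by rewrite cats1 => /rcons_inj[-> ->]; left.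
by rewrite -rcons_cons -rcons_cat => /rcons_inj[-> _]; right; exists s2'.
Qed.

Lemma set_rcons (T : finType) (s : seq T) x : [set y in rcons s x] = x |: [set y in s].
Proof. by apply/setP => y; rewrite !inE mem_rcons inE. Qed.

Lemma sum_card_supsets (I : finType) (P : pred {set I}) (T : {set I}) (k : nat) :
  (forall S, P S -> #|S| = k) ->
  (\sum_(x | x \notin T) #|[pred S | P S & x |: T \subset S]| =
   (k - #|T|) * #|[pred S | P S & T \subset S]|)%N.
Proof.
move=> card_P; under eq_bigr do rewrite -sum1_card.
rewrite (exchange_big_dep (fun S => P S && (T \subset S))) /=; last first.
  by move=> x S _; rewrite inE finset.subUset => /andP[-> /andP[_ ->]].
rewrite mulnC -sum_nat_const; apply: eq_bigr => S /andP[PS TS].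
rewrite sum1_card (@eq_card _ _ (S :\: T)); last first.
  move=> x; rewrite finset.in_setD -topredE /= inE finset.subUset finset.sub1set.
  by rewrite TS PS !andbT.
by rewrite cardsD (finset.setIidPr TS) card_P.
Qed.

Lemma ffact_le_expn n k : (n ^_ k <= n ^ k)%N.
Proof.
rewrite ffact_prod -[in X in (_ <= X)%N](card_ord k) -prod_nat_const.
by apply: leq_prod => i _; rewrite leq_subr.
Qed.

Lemma le_powR_root (R : realType) (c x y : R) (k : nat) : (0 < k)%N ->
  0 <= c -> 0 <= x -> 0 <= y -> x ^+ k <= c * y ^+ k -> x <= powR c k%:R^-1 * y.
Proof.
move=> k_gt0 c_ge0 x_ge0 y_ge0 xk_le.
have root (z : R) : 0 <= z -> powR (z ^+ k) k%:R^-1 = z.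
  by move=> z_ge0; rewrite -powR_mulrn // -powRrM mulfV ?pnatr_eq0 -?lt0n // powRr1.
rewrite -(root x) // -(root y) // -powRM ?exprn_ge0 //.
by apply: ge0_ler_powR; rewrite ?invr_ge0 // nnegrE ?mulr_ge0 ?exprn_ge0.
Qed.

(** * Nearest points in convex sets *)

Section ConvexCombination.
Variables (R : numFieldType) (E : lmodType R) (C : set E).
Hypothesis convexC : convex_set C.

Lemma convex_set_comb2 x y (t : R) : C x -> C y -> 0 <= t -> t <= 1 ->
  C (t *: x + (1 - t) *: y).
Proof.
move=> Cx Cy t_ge0 t_le1.
by have := @convexC x y (Itv01 t_ge0 t_le1); rewrite !inE; apply.
Qed.

Lemma convex_set_comb (I : eqType) (s : seq I) (w : I -> E) (lam : I -> R) :
  (forall j, 0 <= lam j) -> \sum_(j <- s) lam j = 1 ->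
  (forall j, j \in s -> lam j != 0 -> C (w j)) ->
  C (\sum_(j <- s) lam j *: w j).
Proof.
elim: s lam => [|a s IH] lam lam_ge0; first by rewrite big_nil => /esym/eqP; rewrite oner_eq0.
rewrite !big_cons => sum1 Cw.
have Cw_s j : j \in s -> lam j != 0 -> C (w j) by move=> js; apply: Cw; rewrite inE js orbT.
have [lam_a0|lam_a_neq0] := eqVneq (lam a) 0.
  by rewrite lam_a0 scale0r add0r; apply: IH; rewrite // -sum1 lam_a0 add0r.
have Cwa : C (w a) by apply: Cw; rewrite ?inE ?eqxx.
set t := lam a in sum1 *; set sigma := \sum_(j <- s) lam j in sum1.
have sigma_ge0 : 0 <= sigma by apply: sumr_ge0.
have [sigma0|sigma_neq0] := eqVneq sigma 0.
  have := @psumr_eq0 _ _ s (fun=> true) lam (fun j _ => lam_ge0 j).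
  rewrite -/sigma sigma0 eqxx => /esym/allP lam_s0.
  rewrite big1_seq ?addr0; last by move=> j /andP[_ /lam_s0 /eqP ->]; rewrite scale0r.
  by move: sum1; rewrite sigma0 addr0 => ->; rewrite scale1r.
have Cy : C (\sum_(j <- s) (lam j / sigma) *: w j).
  apply: IH => [j||j js]; first by rewrite divr_ge0.
    by rewrite -mulr_suml -/sigma divff.
  by rewrite mulf_eq0 invr_eq0 (negPf sigma_neq0) orbF; exact: Cw_s.
have -> : \sum_(j <- s) lam j *: w j = (1 - t) *: \sum_(j <- s) (lam j / sigma) *: w j.
  have -> : 1 - t = sigma by rewrite -sum1 addrC addKr.
  by rewrite scaler_sumr; apply: eq_bigr => j _; rewrite scalerA mulrC divfK.
by apply: convex_set_comb2 => //; [exact: lam_ge0 | rewrite -sum1 lerDl].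
Qed.

End ConvexCombination.

Section SquaredNorm.
Variables (R : realFieldType) (d : nat).
Local Notation V := 'rV[R]_d.

Definition sqnorm (x : V) : R := \sum_(i < d) x ord0 i ^+ 2.
Definition dotp (x y : V) : R := \sum_(i < d) x ord0 i * y ord0 i.

Lemma sqnorm_ge0 x : 0 <= sqnorm x.
Proof. by apply: sumr_ge0 => i _; rewrite sqr_ge0. Qed.

Lemma sqnorm0 : sqnorm 0 = 0.
Proof. by rewrite /sqnorm big1 // => i _; rewrite mxE expr0n. Qed.

Lemma sqnormD x y : sqnorm (x + y) = sqnorm x + 2 * dotp x y + sqnorm y.
Proof.
rewrite /sqnorm /dotp mulr_sumr -!big_split /=; apply: eq_bigr => i _.
by rewrite !mxE; ring.
Qed.

Lemma sqnormZ t x : sqnorm (t *: x) = t ^+ 2 * sqnorm x.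
Proof. by rewrite /sqnorm mulr_sumr; apply: eq_bigr => i _; rewrite !mxE; ring. Qed.

Lemma dotpZr t x y : dotp x (t *: y) = t * dotp x y.
Proof. by rewrite /dotp mulr_sumr; apply: eq_bigr => i _; rewrite !mxE; ring. Qed.

Definition is_nearest (C : set V) (b p : V) : Prop :=
  C p /\ forall y, C y -> sqnorm (p - b) <= sqnorm (y - b).

Lemma is_nearest_sqnorm_le (C : set V) b p x : convex_set C -> is_nearest C b p -> C x ->
  sqnorm (x - p) + sqnorm (p - b) <= sqnorm (x - b).
Proof.
move=> convC [Cp p_min] Cx.
set u := dotp (p - b) (x - p); set s := sqnorm (x - p).
have s_ge0 : 0 <= s by exact: sqnorm_ge0.
(* Moving from [p] towards [x] inside [C] cannot bring us closer to [b]. *)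
have first_order t : 0 < t -> t <= 1 -> 0 <= 2 * u + t * s.
  move=> t_gt0 t_le1; have := p_min _ (convex_set_comb2 convC Cx Cp (ltW t_gt0) t_le1).
  have -> : t *: x + (1 - t) *: p - b = (p - b) + t *: (x - p).
    by apply/rowP => i; rewrite !mxE; ring.
  rewrite (sqnormD (p - b)) sqnormZ dotpZr -/u -/s => h.
  by rewrite -(pmulr_rge0 _ t_gt0); nra.
have u_ge0 : 0 <= u.
  rewrite leNgt; apply/negP => u_lt0.
  have su_gt0 : 0 < s - u by lra.
  pose t := - u / (s - u).
  have t_gt0 : 0 < t by rewrite divr_gt0 // oppr_gt0.
  have t_le1 : t <= 1 by rewrite ler_pdivrMr //; lra.
  have ts_le : t * s <= - u by rewrite mulrAC ler_pdivrMr // mulrC; nra.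
  by have := first_order t t_gt0 t_le1; lra.
have -> : x - b = (p - b) + (x - p) by rewrite [RHS]addrC addrA subrK.
by rewrite (sqnormD (p - b)) -/u -/s; lra.
Qed.

End SquaredNorm.

Lemma sqnorm_continuous (R : realType) d (b : 'rV[R]_d) :
  continuous (fun x : 'rV[R]_d => sqnorm (x - b)).
Proof.
have coordB i : continuous (fun x : 'rV[R]_d => (x - b) ord0 i).
  move=> x; under eq_fun do rewrite !mxE.
  by apply: continuousB; [exact: coord_continuous | exact: cst_continuous].
apply: continuous_big => [|i _]; first exact: add_continuous.
move=> x; exact: (continuous_comp (coordB i x) (@exprn_continuous R 2 _)).
Qed.

Lemma nearest_exists (R : realType) d (C : set 'rV[R]_d) b : C !=set0 -> compact C ->
  exists p, is_nearest C b p.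
Proof.
move=> C_neq0 compactC.
have [p Cp p_min] := compact_EVT_min C_neq0 compactC
  (continuous_subspaceT (@sqnorm_continuous R d b)).
by exists p; split; [rewrite -inE | move=> y Cy; apply: p_min; rewrite inE].
Qed.

Lemma cball_sqnormE (R : realType) d (q x : 'rV[R]_d) r : 0 <= r ->
  cball q r x = (sqnorm (x - q) <= r ^+ 2).
Proof.
move=> r_ge0; rewrite /cball /enorm /= -[in LHS](ger0_norm r_ge0) -sqrtr_sqr.
by rewrite ler_sqrt // sqr_ge0.
Qed.

(** * Convex hulls of finitely many points *)

Section FiniteHull.
Variables (R : realType) (V : normedModType R) (m : nat) (w : 'I_m -> V).

Definition simplex : set 'rV[R]_m :=
  [set lam | (forall j, 0 <= lam ord0 j) /\ \sum_j lam ord0 j = 1].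

Definition comb (lam : 'rV[R]_m) : V := \sum_j lam ord0 j *: w j.

Definition hull : set V := comb @` simplex.

Lemma comb_continuous : continuous comb.
Proof.
apply: continuous_big => [|j _ lam]; first exact: add_continuous.
by apply: continuousZ; [exact: coord_continuous | exact: cst_continuous].
Qed.

Lemma simplex_closed : closed simplex.
Proof.
have -> : simplex = \bigcap_j ((fun lam : 'rV[R]_m => lam ord0 j) @^-1` [set x | 0 <= x])
    `&` [set lam | \sum_j lam ord0 j = 1].
  by apply/seteqP; split=> lam [lam_ge0 lam_sum1]; split=> // j *; exact: lam_ge0.
apply: closedI.
  apply: closed_bigI => j _.
  by apply: closed_comp (@closed_ge _ 0) => lam _; exact: coord_continuous.
apply: closed_comp (@closed_eq _ 1) => lam _.
by apply: continuous_big => [|j _]; [exact: add_continuous | exact: coord_continuous].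
Qed.

Lemma simplex_compact : compact simplex.
Proof.
have box_compact : compact [set lam : 'rV[R]_m | forall j, `[(0 : R), 1]%classic (lam ord0 j)].
  by apply: (@rV_compact _ _ (fun=> `[(0 : R), 1]%classic)) => _; exact: segment_compact.
apply: (subclosed_compact simplex_closed box_compact).
move=> lam [lam_ge0 lam_sum1] i /=; rewrite in_itv /= lam_ge0 -lam_sum1.
by rewrite (bigD1 i) //= lerDl sumr_ge0.
Qed.

Lemma hull_compact : compact hull.
Proof.
apply: continuous_compact simplex_compact.
by apply: continuous_subspaceT; exact: comb_continuous.
Qed.

Lemma hull_convex : convex_set hull.
Proof.
move=> x y t; rewrite !inE => -[l1 [l1_ge0 l1_sum1] <-] [l2 [l2_ge0 l2_sum1] <-].
have t_le1 : t%:num <= 1 by exact: le1.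
change (hull (t%:num *: comb l1 + (1 - t%:num) *: comb l2)).
exists (t%:num *: l1 + (1 - t%:num) *: l2); last first.
  rewrite /comb !scaler_sumr -big_split; apply: eq_bigr => j _.
  by rewrite !mxE /= !scalerA -scalerDl.
split=> [j|]; first by rewrite !mxE addr_ge0 // mulr_ge0 // ?subr_ge0.
under eq_bigr do rewrite !mxE.
by rewrite big_split /= -!mulr_sumr l1_sum1 l2_sum1 !mulr1 subrKC.
Qed.

Lemma hull_mem j : hull (w j).
Proof.
have delta_sum1 : \sum_i (i == j)%:R = 1 :> R.
  by rewrite (bigD1 j) //= eqxx big1 ?addr0 // => i /negPf ->.
exists (\row_i (i == j)%:R).
  by split=> [i|]; rewrite ?mxE ?ler0n //; under eq_bigr do rewrite mxE.
rewrite /comb (bigD1 j) //= mxE eqxx scale1r big1 ?addr0 // => i /negPf ij.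
by rewrite mxE ij scale0r.
Qed.

Lemma hull_sub (C : set V) : convex_set C -> (forall j, C (w j)) -> hull `<=` C.
Proof.
move=> convC Cw _ [lam [lam_ge0 lam_sum1] <-].
exact: convex_set_comb lam_sum1 _.
Qed.

End FiniteHull.

(** * Cores of pierced subfamilies *)

Section Core.
Variables (R : realType) (d n k : nat) (F : 'I_n -> set 'rV[R]_d) (b : 'rV[R]_d).
Hypotheses (convexF : forall i, convex_set (F i)) (k_gt0 : (0 < k)%N).
Local Notation V := 'rV[R]_d.
Implicit Types (S T U : {set 'I_n}).

Definition pierced (S : {set 'I_n}) : Prop :=
  exists p, cball b 1 p /\ forall i, i \in S -> F i p.

Definition good (S : {set 'I_n}) : bool := (#|S| == k) && `[< pierced S >].

Definition witness (S : {set 'I_n}) : V :=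
  xget b [set p | cball b 1 p /\ forall i, i \in S -> F i p].

Lemma witnessP S : pierced S -> cball b 1 (witness S) /\ forall i, i \in S -> F i (witness S).
Proof. exact: xgetPex. Qed.

Definition good_supsets (T : {set 'I_n}) : {set {set 'I_n}} := [set S | good S & T \subset S].

(* Taking hulls of finitely many witnesses, rather than intersecting the
   [F i] themselves, makes the cores compact, so that nearest points exist. *)
Definition core (T : {set 'I_n}) : set V :=
  hull (fun j : 'I_#|good_supsets T| => witness (enum_val j)).

Lemma core_convex T : convex_set (core T).
Proof. exact: hull_convex. Qed.

Lemma core_compact T : compact (core T).
Proof. exact: hull_compact. Qed.

Lemma witness_core T S : good S -> T \subset S -> core T (witness S).
Proof.
move=> goodS TS; have S_sup : S \in good_supsets T by rewrite inE goodS.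
have := hull_mem (fun j => witness (enum_val j)) (enum_rank_in S_sup S).
by rewrite enum_rankK_in.
Qed.

Lemma core_sub_F T i : i \in T -> core T `<=` F i.
Proof.
move=> iT; apply: hull_sub => // j.
have /setIdP[/andP[_ /asboolP pierced_j] /fintype.subsetP sub_j] := enum_valP j.
by apply: (witnessP pierced_j).2; exact: sub_j.
Qed.

Lemma core_antimono T U : T \subset U -> core U `<=` core T.
Proof.
move=> TU; apply: hull_sub => [|j]; first exact: core_convex.
have /setIdP[good_j Uj] := enum_valP j.
by apply: witness_core good_j (fintype.subset_trans TU Uj).
Qed.

Definition feasible T : Prop := core T !=set0.

Lemma feasible_sub T U : T \subset U -> feasible U -> feasible T.
Proof. by move=> TU [x Ux]; exists x; exact: core_antimono Ux. Qed.

Lemma good_feasible S : good S -> feasible S.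
Proof. by move=> goodS; exists (witness S); exact: witness_core. Qed.

(* [nearest T] is [b], and [sqdist T] is 0, when [T] is not feasible. *)
Definition nearest T : V := xget b (is_nearest (core T) b).

Lemma nearestP T : feasible T -> is_nearest (core T) b (nearest T).
Proof. by move=> feasT; apply: xgetPex; exact: nearest_exists feasT (@core_compact T). Qed.

Definition sqdist T : R := sqnorm (nearest T - b).

Lemma sqdist_ge0 T : 0 <= sqdist T.
Proof. exact: sqnorm_ge0. Qed.

Lemma sqdist_good S : good S -> sqdist S <= 1.
Proof.
move=> goodS; have [_ S_min] := nearestP (good_feasible goodS).
apply: le_trans (S_min _ (witness_core goodS (subxx S))) _.
have /andP[_ /asboolP /witnessP[ball_w _]] := goodS.
by move: ball_w; rewrite cball_sqnormE // expr1n.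
Qed.

Definition small_step T x : bool :=
  (x \notin T) && `[< feasible (x |: T) /\ sqdist (x |: T) - sqdist T <= k%:R^-1 >].

Definition hit_count (q : V) : nat :=
  #|[pred i : 'I_n | `[< exists x, F i x /\ cball q (Num.sqrt k%:R^-1) x >]]|.

Lemma small_step_hits T x : small_step T x ->
  exists y, F x y /\ cball (nearest T) (Num.sqrt k%:R^-1) y.
Proof.
move=> /andP[_ /asboolP[feas_xT step_le]].
have TxT : T \subset x |: T by exact: finset.subsetUr.
have [xT_near _] := nearestP feas_xT.
exists (nearest (x |: T)); split; first by apply: core_sub_F xT_near; rewrite setU11.
rewrite cball_sqnormE ?sqrtr_ge0 // sqr_sqrtr ?invr_ge0 //.
have := is_nearest_sqnorm_le (@core_convex T) (nearestP (feasible_sub TxT feas_xT))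
  (core_antimono TxT xT_near).
by rewrite -/(sqdist T) -/(sqdist (x |: T)); lra.
Qed.

Lemma mem_hits T x : feasible T -> x \in T ->
  exists y, F x y /\ cball (nearest T) (Num.sqrt k%:R^-1) y.
Proof.
move=> feasT xT; have [T_near _] := nearestP feasT.
exists (nearest T); split; first exact: core_sub_F T_near.
by rewrite cball_sqnormE ?sqrtr_ge0 // subrr sqnorm0 sqr_ge0.
Qed.

Lemma card_small_steps T : feasible T ->
  (#|T| + #|[pred x | small_step T x]| <= hit_count (nearest T))%N.
Proof.
move=> feasT.
have disjoint : [predI T & [pred x | small_step T x]] =i pred0.
  by move=> x; rewrite !inE /small_step; case: (x \in T).
rewrite -cardUI (eq_card0 disjoint) addn0.
apply: subset_leq_card; apply/fintype.subsetP => x.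
rewrite !inE => /orP[xT|step_x]; first exact: mem_hits.
exact: small_step_hits.
Qed.

Lemma good_hit_count_ge S : good S -> (k <= hit_count (nearest S))%N.
Proof.
move=> goodS; have /andP[/eqP <- _] := goodS.
exact: leq_trans (leq_addr _ _) (card_small_steps (good_feasible goodS)).
Qed.

Lemma good_chain_small_step s : uniq s -> good [set y in s] ->
  exists s1 x s2, s = s1 ++ x :: s2 /\ small_step [set y in s1] x.
Proof.
move=> uniq_s goods.
have size_s : size s = k by have /andP[/eqP] := goods; rewrite cardsE (card_uniqP uniq_s).
have x0 : 'I_n.
  by case: s size_s {uniq_s goods} => [/esym k0|x0 _ _]; [move: k_gt0; rewrite k0 | exact: x0].
(* The k increments of [sqdist] along the prefixes of [s] add up to at most 1. *)
pose f j := sqdist [set y in take j s].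
have [|j jk step_le] := @exists_small_increment _ f k k%:R^-1 k_gt0.
  rewrite mulfV ?pnatr_eq0 -?lt0n // /f take0 take_oversize ?size_s //.
  by have := sqdist_good goods; have := sqdist_ge0 [set y in [::]]; lra.
have s_split : s = take j s ++ nth x0 s j :: drop j.+1 s.
  by rewrite -drop_nth ?cat_take_drop // size_s.
exists (take j s), (nth x0 s j), (drop j.+1 s); split=> //.
have take_succ : [set y in take j.+1 s] = nth x0 s j |: [set y in take j s].
  by rewrite (take_nth x0) ?size_s // set_rcons.
apply/andP; split.
  by move: uniq_s; rewrite {1}s_split cat_uniq /= inE => /and4P[_ /norP[]].
apply/asboolP; rewrite -take_succ; split => //.
apply: feasible_sub (good_feasible goods).
by apply/fintype.subsetP => y; rewrite !inE; exact: mem_take.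
Qed.

Definition large_step T x : bool := (x \notin T) && ~~ small_step T x.

Definition bad S : bool := (#|S| == k) && ~~ `[< pierced S >].

Fixpoint large_extensions (j : nat) (s : seq 'I_n) : nat :=
  if j is j'.+1 then \sum_(x | large_step [set y in s] x) large_extensions j' (rcons s x)
  else 1.

Definition large_chain (s : seq 'I_n) : Prop :=
  uniq s /\ forall s1 x s2, s = s1 ++ x :: s2 -> large_step [set y in s1] x.

Lemma large_chain_rcons s x : large_chain s -> large_step [set y in s] x ->
  large_chain (rcons s x).
Proof.
move=> [uniq_s large_s] large_x; split.
  by rewrite rcons_uniq uniq_s andbT; move: large_x => /andP[]; rewrite inE.
by move=> s1 y s2 s_split; case: (rcons_eq_cat_cons s_split) => [[-> ->] //|[s2' /large_s]].
Qed.

Lemma large_chain_bad s : large_chain s -> size s = k -> bad [set y in s].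
Proof.
move=> [uniq_s large_s] size_s; rewrite /bad cardsE (card_uniqP uniq_s) size_s eqxx /=.
apply/negP => /asboolP pierced_s.
have goods : good [set y in s].
  by rewrite /good cardsE (card_uniqP uniq_s) size_s eqxx; apply/asboolP.
have [s1 [x [s2 [s_split small_x]]]] := good_chain_small_step uniq_s goods.
by have := large_s _ _ _ s_split; rewrite /large_step small_x andbF.
Qed.

Lemma large_extensions_le j s : large_chain s -> (size s + j = k)%N ->
  (large_extensions j s <= j`! * #|[pred S | bad S & [set y in s] \subset S]|)%N.
Proof.
elim: j s => [|j IH] s chain_s size_s /=.
  rewrite mul1n; apply/card_gt0P; exists [set y in s]; rewrite inE subxx andbT.
  by apply: large_chain_bad; rewrite // -size_s addn0.
have uniq_s := chain_s.1.
apply: (@leq_trans (\sum_(x | x \notin [set y in s])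
    j`! * #|[pred S | bad S & x |: [set y in s] \subset S]|)).
  rewrite big_mkcond [X in (_ <= X)%N]big_mkcond /=; apply: leq_sum => x _.
  case: ifP => [large_x|_]; last by case: ifP.
  have /andP[-> _] := large_x; rewrite -set_rcons.
  by apply: IH; [exact: large_chain_rcons | rewrite size_rcons addSnnS].
rewrite -big_distrr /= (@sum_card_supsets _ _ _ k) => [|S /andP[/eqP] //].
by rewrite cardsE (card_uniqP uniq_s) -size_s addKn factS mulnCA mulnA.
Qed.

Lemma card_large_small T :
  (#|[pred x | large_step T x]| + #|[pred x | small_step T x]| = n - #|T|)%N.
Proof.
have -> : (n - #|T| = #|[predC T]|)%N by have := cardC T; rewrite card_ord; lia.
rewrite -(cardID [pred x | small_step T x] [predC T]) addnC; congr (_ + _)%N.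
  by apply: eq_card => x; rewrite !inE /small_step; case: (x \in T).
by apply: eq_card => x; rewrite !inE /large_step andbC.
Qed.

Section MaxHitCount.
Variable M : nat.
Hypotheses (hits_le_M : forall T, feasible T -> (hit_count (nearest T) <= M)%N)
  (k_le_M : (k <= M)%N).

Lemma card_large_steps T : (#|T| < k)%N -> (n - M <= #|[pred x | large_step T x]|)%N.
Proof.
move=> T_lt_k; have := card_large_small T.
have [feasT|infeasT] := pselect (feasible T).
  by have := leq_trans (card_small_steps feasT) (hits_le_M feasT); lia.
suff -> : #|[pred x | small_step T x]| = 0%N by lia.
apply: eq_card0 => x; rewrite !inE /small_step; apply/negP => /andP[_ /asboolP[feas_xT _]].
by apply: infeasT; apply: feasible_sub feas_xT; exact: finset.subsetUr.
Qed.

Lemma large_extensions_ge j s : (size s + j <= k)%N -> ((n - M) ^ j <= large_extensions j s)%N.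
Proof.
elim: j s => [|j IH] s size_s /=; first by rewrite expn0.
apply: (@leq_trans (\sum_(x | large_step [set y in s] x) (n - M) ^ j)).
  rewrite sum_nat_const expnS leq_mul // card_large_steps //.
  by rewrite cardsE (leq_ltn_trans (card_size s)) // -addn1 (leq_trans _ size_s) ?leq_add2l.
by apply: leq_sum => x _; apply: IH; rewrite size_rcons addSnnS.
Qed.

End MaxHitCount.

Lemma expn_le_fact_card_bad M :
  (forall T, feasible T -> (hit_count (nearest T) <= M)%N) -> (k <= M)%N ->
  ((n - M) ^ k <= k`! * #|[pred S | bad S]|)%N.
Proof.
move=> hits_le_M k_le_M.
have chain_nil : large_chain [::] by split=> // -[].
apply: leq_trans (large_extensions_ge hits_le_M k_le_M (j := k) (s := [::]) (leqnn k)) _.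
apply: leq_trans (large_extensions_le chain_nil (add0n k)) _.
rewrite leq_mul2l; apply/orP; right; apply: subset_leq_card; apply/fintype.subsetP => S.
by rewrite !inE => /andP[].
Qed.

Lemma card_bad_good :
  (#|[pred S | bad S]| + #|[pred S | good S]| = 'C(n, k))%N.
Proof.
rewrite -[n in 'C(n, _)]card_ord -card_draws cardsE.
rewrite -(cardID [pred S | `[< pierced S >]] [pred S : {set 'I_n} | #|S| == k]) addnC.
by congr (_ + _)%N; apply: eq_card => S; rewrite !inE andbC.
Qed.

Lemma fact_card_bad_le (alpha : R) : alpha <= 1 ->
  alpha * 'C(n, k)%:R <= #|[pred S | good S]|%:R ->
  (k`! * #|[pred S | bad S]|)%:R <= (1 - alpha) * n%:R ^+ k.
Proof.
move=> alpha_le1 many_good.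
have fact_binom : k`!%:R * 'C(n, k)%:R <= n%:R ^+ k :> R.
  by rewrite -natrM -natrX mulnC bin_ffact ler_nat ffact_le_expn.
have card_bad : #|[pred S | bad S]|%:R = 'C(n, k)%:R - #|[pred S | good S]|%:R :> R.
  by rewrite -card_bad_good natrD addrK.
rewrite natrM card_bad; apply: le_trans (_ : _ <= (1 - alpha) * (k`!%:R * 'C(n, k)%:R)) _.
  by rewrite mulrCA ler_wpM2l // mulrBl mul1r; lra.
by rewrite ler_wpM2l // subr_ge0.
Qed.

Lemma exists_max_hit_count : (exists S, good S) ->
  exists2 T, feasible T &
    forall U, feasible U -> (hit_count (nearest U) <= hit_count (nearest T))%N.
Proof.
move=> [S goodS].
have [T /asboolP feasT T_max] := @arg_maxnP _ S (fun T => `[< feasible T >])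
  (fun T => hit_count (nearest T)) (asboolT (good_feasible goodS)).
by exists T => // U feasU; apply: T_max; exact: asboolT.
Qed.

End Core.

Unset Implicit Arguments.

Theorem theorem4p4 (R : realType) (d n k : nat) (alpha : R)
  (F : 'I_n -> set 'rV[R]_d) (b : 'rV[R]_d) :
  0 < alpha -> alpha <= 1 -> (1 <= k)%N ->
  injective F -> (forall i, convex_set (F i)) -> (k <= n)%N ->
  alpha * ('C(n, k))%:R <=
    (#|[pred S : {set 'I_n} | (#|S| == k) &&
        `[< exists p, cball b 1 p /\ (forall i, i \in S -> F i p) >]]|)%:R ->
  exists q : 'rV[R]_d,
    (1 - powR (1 - alpha) (k%:R)^-1) * n%:R <=
    (#|[pred i : 'I_n | `[< exists x, F i x /\ cball q (Num.sqrt (k%:R^-1)) x >]]|)%:R.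
Proof.
move=> alpha_gt0 alpha_le1 k_gt0 _ convexF k_le_n many_good.
have [S goodS] : exists S, good k F b S.
  have : (0 < #|[pred S | good k F b S]|)%N.
    by rewrite -(ltr0n R); apply: lt_le_trans many_good; rewrite mulr_gt0 // ltr0n bin_gt0.
  by case/card_gt0P => S; exists S.
have [T _ T_max] := exists_max_hit_count (ex_intro _ S goodS).
exists (nearest k F b T); set M := hit_count k F (nearest k F b T).
change ((1 - powR (1 - alpha) k%:R^-1) * n%:R <= M%:R).
have k_le_M : (k <= M)%N.
  exact: leq_trans (good_hit_count_ge convexF goodS) (T_max _ (good_feasible goodS)).
have M_le_n : (M <= n)%N by rewrite (leq_trans (max_card _)) ?card_ord.
have excess_le : (n - M)%:R ^+ k <= (1 - alpha) * n%:R ^+ k :> R.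
  rewrite -natrX; apply: le_trans (fact_card_bad_le alpha_le1 many_good).
  by rewrite ler_nat expn_le_fact_card_bad.
have one_sub_alpha_ge0 : 0 <= 1 - alpha by rewrite subr_ge0.
have := le_powR_root k_gt0 one_sub_alpha_ge0 (ler0n _ _) (ler0n _ _) excess_le.
by rewrite natrB //; lra.
Qed.
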